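(* Let $V=V_1\oplus\cdots\oplus V_b$ with each $V_i\cong\mathbb{F}_2^s$. Let $\circ$ and $\diamond$ be two parallel alternative operations on $V$, defined componentwise by alternative operations $\circ_1,\dots,\circ_b$ and $\diamond_1,\dots,\diamond_b$ on $V_1,\dots,V_b$ respectively, such that $\dim W_{\circ_i}=\dim W_{\diamond_i}=s-2$ for all $i$. Then there exists $g\in\mathrm{GL}(V)$ such that $T_\diamond=T_\circ^g$.
   Context: Vectors are row vectors and maps are written in postfix notation. For a vector space $X$ over $\mathbb{F}_2$, an alternative operation on $X$ is defined from an elementary abelian $2$-subgroup $T<\mathrm{AGL}(X,+)$ acting regularly on $X$: writing $\tau_a$ for the unique element of $T$ with $0\tau_a=a$, set $a\circ b:=a\tau_b$; the translation group of $\circ$ is $T_\circ=T$. It is assumed that the xor-translations $x\mapsto x+a$ are affine with respect to $\circ$, i.e. lie in the normaliser of $T_\circ$ in $\mathrm{Sym}(X)$. The weak key space is $W_\circ=\{k: x\circ k=x+k\ \forall x\}$. An alternative operation $\circ$ on $V=V_1\oplus\cdots\oplus V_b$ is parallel, defined by alternative operations $\circ_j$ on $V_j$, if $(x_1,\dots,x_b)\circ(y_1,\dots,y_b)=(x_1\circ_1y_1,\dots,x_b\circ_by_b)$ for all $x_j,y_j\in V_j$. For a subgroup $T$ and $g\in\mathrm{GL}(V)$, $T^g:=gTg^{-1}$. *)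

From HB Require Import structures.
From mathcomp Require Import all_boot all_order all_algebra all_fingroup.
Set Implicit Arguments. Unset Strict Implicit. Unset Printing Implicit Defensive.
Import GRing.Theory.

(* Vector spaces over F_2 are modelled as matrix spaces 'M['F_2]_(m, n)
   (row vectors when m = 1).  Maps act on the right (postfix notation of the
   paper), which matches MathComp's permutation product: (g * h) x = h (g x). *)
Notation mat m n := 'M['F_2]_(m, n).

Section AltOp.
Variables m n : nat.
Local Notation X := (mat m n).
Implicit Types (f g t : {perm X}) (T : {set {perm X}}).

Definition is_GL g : Prop :=
  forall (a : 'F_2) (x y : X), g (a *: x + y)%R = (a *: g x + g y)%R.

Definition is_affine f : Prop :=
  forall (a : 'F_2) (x y : X),
    (f (a *: x + y) - f 0 = a *: (f x - f 0) + (f y - f 0))%R.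

Definition xor_tr (a : X) : {perm X} := perm (@addIr _ a).

(* T^g := g T g^{-1} (postfix composition: first g, then t, then g^{-1}) *)
Definition conj_by (T : {set {perm X}}) g : {set {perm X}} :=
  [set (g * t * g^-1)%g | t in T].

Definition is_alt_op T : Prop :=
  [/\ [/\ group_set T, abelian T & (forall t, t \in T -> (t * t = 1)%g)],
      (forall t, t \in T -> is_affine t),
      (forall x y : X, exists! t, t \in T /\ t x = y) &
      (forall a : X, conj_by T (xor_tr a) = T)].

Definition tau T (a : X) : {perm X} := odflt 1%g [pick t in T | t 0%R == a].

Definition circ T (a b : X) : X := tau T b a.

Definition weak_keys T : {set X} :=
  [set k | [forall x, circ T x k == (x + k)%R]].

End AltOp.

(* The alternative operation on V = V_1 (+) ... (+) V_b, V = 'M_(b, s) whose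
   i-th row is the V_i-component, is parallel, defined by the operations
   given by Ts i on V_i = 'rV_s. *)
Definition parallel (b s : nat) (T : {set {perm mat b s}})
    (Ts : 'I_b -> {set {perm mat 1 s}}) : Prop :=
  forall (i : 'I_b) (x y : mat b s),
    row i (circ T x y) = circ (Ts i) (row i x) (row i y).

Definition has_dim (s : nat) (W : {set mat 1 s}) (d : nat) : Prop :=
  exists M : 'M['F_2]_s, \rank M = d /\ forall k, k \in W <-> (k <= M)%MS.

From HB Require Import structures.
From mathcomp Require Import all_boot all_order all_algebra all_fingroup.
From mathcomp Require Import ring.
Set Implicit Arguments. Unset Strict Implicit. Unset Printing Implicit Defensive.
Import GRing.Theory.
Local Open Scope ring_scope.

(* Writing x ∘ y = x + y + x·y, the translations of T are the maps x ↦ x ∘ y.  Affinity,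
   regularity, commutativity and 2-torsion of T make · a commutative, associative,
   F_2-bilinear product with x·x = 0, whose annihilator is the weak key space W.  When
   dim W = s - 2, pick e1, e2 with w := e1·e2 ≠ 0: then w ∈ W (e.g. e1·w = (e1·e1)·e2 = 0),
   e1, e2 and a basis of W form a basis of F_2^s, and taking the basis of W with sum w gives
   x·y = (x_1 y_2 + x_2 y_1) w in these coordinates.  Hence all such operations on F_2^s
   are linearly isomorphic, and the block-diagonal map assembled from the isomorphisms of
   the components intertwines the two parallel operations, so it conjugates one
   translation group onto the other. *)

Lemma F2_cases (a : 'F_2) : a = 0 \/ a = 1.
Proof. by case: a => [[|[|//]] ?]; [left|right]; apply/val_inj. Qed.

Lemma mxF2_addrr m n (x : mat m n) : x + x = 0.
Proof. by apply/matrixP => i j; rewrite !mxE addrr_pchar2 ?(pchar_Fp (isT : prime 2)). Qed.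

Section Translations.
Variables m n : nat.
Local Notation X := (mat m n).
Variable T : {set {perm X}}.
Hypothesis altT : is_alt_op T.

Lemma tau_spec a : tau T a \in T /\ tau T a 0 = a.
Proof.
case: altT => _ _ regT _; have [t [[tT t0] _]] := regT 0 a.
by rewrite /tau; case: pickP => [t' /andP [? /eqP] // | /(_ t)]; rewrite tT t0 eqxx.
Qed.

Lemma tau_mem a : tau T a \in T. Proof. by case: (tau_spec a). Qed.

Lemma tau0 a : tau T a 0 = a. Proof. by case: (tau_spec a). Qed.

Lemma tauK t : t \in T -> tau T (t 0) = t.
Proof.
move=> tT; case: altT => _ _ regT _; have [t1 [_ uniq0]] := regT 0 (t 0).
by rewrite -[RHS](uniq0 t (conj tT erefl)) (uniq0 _ (conj (tau_mem _) (tau0 _))).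
Qed.

Lemma tauM a c : (tau T a * tau T c)%g = tau T (circ T a c).
Proof.
case: altT => [[/group_setP [_ mulT] _ _] _ _ _].
by rewrite -[LHS]tauK ?mulT ?tau_mem // permM tau0.
Qed.

Lemma circC : commutative (circ T).
Proof.
move=> x y; case: altT => [[_ abT _] _ _ _].
by rewrite /circ -{1}(tau0 x) -{2}(tau0 y) -!permM (centsP abT _ (tau_mem x) _ (tau_mem y)).
Qed.

Lemma circA : associative (circ T).
Proof. by move=> x a c; rewrite /circ -tauM permM. Qed.

Lemma circ0x : left_id 0 (circ T).
Proof. exact: tau0. Qed.

Lemma circxx a : circ T a a = 0.
Proof.
case: altT => [[_ _ invT] _ _ _].
by rewrite /circ -[X in tau T a X](tau0 a) -permM invT ?tau_mem // perm1.
Qed.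

End Translations.

Lemma conj_by_circ_morph m n (Tc Td : {set {perm mat m n}}) (g : {perm mat m n}) :
    is_alt_op Tc -> is_alt_op Td ->
    (forall x y, circ Tc (g x) (g y) = g (circ Td x y)) ->
  Td = conj_by Tc g.
Proof.
move=> altc altd gM.
have tau_conj a : (g * tau Tc (g a) * g^-1)%g = tau Td a.
  by apply/permP => x; rewrite !permM -/(circ Tc (g x) (g a)) gM permK.
apply/setP => t; apply/idP/imsetP => [tTd | [t' t'Tc ->]].
  by exists (tau Tc (g (t 0))); rewrite ?tau_mem // tau_conj tauK.
by rewrite -(tauK altc t'Tc) -[t' 0](permKV g) tau_conj tau_mem.
Qed.

Section AltMul.
Variables m n : nat.
Local Notation X := (mat m n).
Variable T : {set {perm X}}.
Hypothesis altT : is_alt_op T.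

Definition altmul x y : X := circ T x y - y - x.

Lemma circE x y : circ T x y = x + y + altmul x y.
Proof. by rewrite /altmul -[_ - y - x]addrA -opprD (addrC y x) [RHS]addrC subrK. Qed.

Lemma altmulC : commutative altmul.
Proof. by move=> x y; rewrite /altmul (circC altT) addrAC. Qed.

Lemma altmulDl x x' y : altmul (x + x') y = altmul x y + altmul x' y.
Proof.
case: altT => _ affT _ _.
have := affT _ (tau_mem altT y) 1 x x'; rewrite !scale1r (tau0 altT) => affy.
by rewrite /altmul /circ affy opprD addrACA.
Qed.

Lemma altmulDr x y y' : altmul x (y + y') = altmul x y + altmul x y'.
Proof. by rewrite altmulC altmulDl !(altmulC x). Qed.

Lemma altmul0x y : altmul 0 y = 0.
Proof. by rewrite /altmul (circ0x altT) subr0 subrr. Qed.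

Lemma altmulxx x : altmul x x = 0.
Proof. by rewrite /altmul (circxx altT) sub0r -opprD mxF2_addrr oppr0. Qed.

Lemma altmulZl (a : 'F_2) x y : altmul (a *: x) y = a *: altmul x y.
Proof. by case: (F2_cases a) => ->; rewrite ?scale0r ?scale1r ?altmul0x. Qed.

Lemma altmulZr (a : 'F_2) x y : altmul x (a *: y) = a *: altmul x y.
Proof. by rewrite altmulC altmulZl altmulC. Qed.

Lemma altmulA : associative altmul.
Proof.
move=> x y z; have := circA altT x y z.
rewrite !circE altmulDr altmulDr altmulDl altmulDl => /matrixP assoc.
apply/matrixP => i j; move/eqP: (assoc i j); rewrite !mxE -subr_eq0 => /eqP assoc_ij.
by rewrite -[LHS]subr0 -assoc_ij; ring.
Qed.

Lemma weak_keysP k : reflect (forall x, altmul x k = 0) (k \in weak_keys T).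
Proof.
rewrite inE; apply: (iffP forallP) => [kW x | k0 x].
  by move/eqP: (kW x); rewrite circE -[RHS]addr0 => /addrI.
by rewrite circE k0 addr0.
Qed.

End AltMul.

Lemma unitmx_transitive_rV (F : fieldType) k (c c' : 'rV[F]_k) :
  c != 0 -> c' != 0 -> exists2 R : 'M_k, R \in unitmx & c *m R = c'.
Proof.
move=> nz_c nz_c'.
have c_free : row_free c by rewrite /row_free rank_rV nz_c.
have cRc' : c *m (pinvmx c *m c') = c' by rewrite mulmxA mulmxVp // mul1mx.
have rank_cRc' : \rank (c *m (pinvmx c *m c')) = \rank c.
  by rewrite cRc' !rank_rV nz_c nz_c'.
by have [R unitR cR] := complete_unitmx rank_cRc'; exists R; rewrite -?cR.
Qed.

Lemma eqmx_rows_sum (F : fieldType) k p (B : 'M[F]_(k, p)) (w : 'rV_p) :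
    (w <= B)%MS -> w != 0 ->
  exists2 B' : 'M_(k, p), (B' :=: B)%MS & const_mx 1 *m B' = w.
Proof.
case/submxP=> c -> nz_cB.
have nz_c : c != 0 by apply: contraNneq nz_cB => ->; rewrite mul0mx.
have nz_1 : const_mx 1 != 0 :> 'rV[F]_k.
  apply: contraNneq nz_c => /rowP one0; apply/eqP/rowP => j.
  by have /eqP := one0 j; rewrite !mxE oner_eq0.
have [R unitR oneR] := unitmx_transitive_rV nz_1 nz_c.
by exists (R *m B); [apply: eqmxMfull; rewrite row_full_unit | rewrite mulmxA oneR].
Qed.

Lemma has_dim_row_base s (W : {set mat 1 s}) d : has_dim W d ->
  exists2 B : 'M['F_2]_(d, s), \rank B = d & forall k, k \in W <-> (k <= B)%MS.
Proof.
case=> M [<- WM]; exists (row_base M); first by rewrite eq_row_base.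
by move=> k; rewrite WM eq_row_base.
Qed.

Lemma ltmx_col_mx (F : fieldType) m p (x : 'rV[F]_p) (A : 'M_(m, p)) :
  ~~ (x <= A)%MS -> (A < col_mx x A)%MS.
Proof. by move=> xA; rewrite ltmxE -!addsmxE addsmxSr addsmx_sub submx_refl andbT. Qed.

Definition coord0 (R : Type) n (u : 'rV[R]_(1 + (1 + n))) : R := lsubmx u 0 0.
Definition coord1 (R : Type) n (u : 'rV[R]_(1 + (1 + n))) : R := lsubmx (rsubmx u) 0 0.

Lemma mul_rV_col3 (R : pzRingType) n p (u : 'rV[R]_(1 + (1 + n)))
    (e1 e2 : 'rV_p) (B : 'M_(n, p)) :
  u *m col_mx e1 (col_mx e2 B) = coord0 u *: e1 + (coord1 u *: e2 + rsubmx (rsubmx u) *m B).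
Proof.
rewrite -{1}(hsubmxK u) -{1}(hsubmxK (rsubmx u)) !mul_row_col.
by rewrite [lsubmx u]mx11_scalar [lsubmx (rsubmx u)]mx11_scalar !mul_scalar_mx.
Qed.

Section CodimTwo.
Variable n : nat.
Local Notation V := (mat 1 n.+2).
Variable T : {set {perm V}}.
Hypothesis altT : is_alt_op T.
Variable B : 'M['F_2]_(n, n.+2).
Hypothesis weak_keysB : forall k, k \in weak_keys T <-> (k <= B)%MS.
Hypothesis rankB : \rank B = n.

Lemma altmul_weakr k x : (k <= B)%MS -> altmul T x k = 0.
Proof. by move/weak_keysB/weak_keysP; apply. Qed.

Lemma altmul_weakl k x : (k <= B)%MS -> altmul T k x = 0.
Proof. by move=> kB; rewrite (altmulC altT) altmul_weakr. Qed.

Lemma altmul_neq0 : exists e1 e2, altmul T e1 e2 != 0.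
Proof.
have [e1 e1B] : exists e1 : V, ~~ (e1 <= B)%MS.
  have : ~~ (1%:M <= B)%MS by rewrite sub1mx /row_full rankB ltn_eqF.
  by case/row_subPn => i iB; exists (row i 1%:M).
exists e1; apply/existsP; rewrite -negb_forall; apply/negP => /forallP e1_0.
move/negP: e1B; apply; apply/weak_keysB/weak_keysP => x.
by rewrite (altmulC altT); apply/eqP.
Qed.

Variables e1 e2 : V.
Hypothesis e12_neq0 : altmul T e1 e2 != 0.
Local Notation E := (col_mx e1 (col_mx e2 B) : 'M_(n.+2)).

Lemma altmul_coords u v :
  altmul T (u *m E) (v *m E) = (coord0 u * coord1 v + coord1 u * coord0 v) *: altmul T e1 e2.
Proof.
rewrite !mul_rV_col3 !(altmulDl altT) !(altmulDr altT) !(altmulZl altT) !(altmulZr altT).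
rewrite !(altmulxx altT) !(altmul_weakl _ (submxMl _ _)) !(altmul_weakr _ (submxMl _ _)).
rewrite (altmulC altT e2 e1) !scaler0 !addr0 !add0r !scalerA -scalerDl.
by rewrite mulrC (mulrC (coord1 u)).
Qed.

Lemma coords_unitmx : E \in unitmx.
Proof.
have e2B : (B < col_mx e2 B)%MS.
  by apply: ltmx_col_mx; apply: contra e12_neq0 => /(altmul_weakr e1) ->.
have e1e2B : (col_mx e2 B < col_mx e1 (col_mx e2 B))%MS.
  apply: ltmx_col_mx; apply: contra e12_neq0; rewrite -addsmxE => /sub_addsmxP [[a k] /= ->].
  rewrite (altmulDl altT) [a]mx11_scalar mul_scalar_mx (altmulZl altT) (altmulxx altT).
  by rewrite scaler0 add0r (altmul_weakl _ (submxMl _ _)).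
have : (n.+2 <= \rank (col_mx e1 (col_mx e2 B)))%N.
  by rewrite -{1}rankB; apply: leq_trans (rank_ltmx e1e2B); rewrite ltnS rank_ltmx.
by rewrite -row_full_unit /row_full eqn_leq rank_leq_col.
Qed.

Lemma altmul12_weak_key : altmul T e1 e2 \in weak_keys T.
Proof.
apply/weak_keysP => x; rewrite -(mulmxKV coords_unitmx x) mul_rV_col3.
rewrite !(altmulDl altT) !(altmulZl altT) (altmul_weakl _ (submxMl _ _)).
rewrite [X in altmul T e2 X](altmulC altT e1 e2) !(altmulA altT) !(altmulxx altT).
by rewrite !(altmul0x altT) !scaler0 !addr0.
Qed.

End CodimTwo.

Definition std_altmul n (u v : 'rV['F_2]_(1 + (1 + n))) : 'rV['F_2]_(1 + (1 + n)) :=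
  (coord0 u * coord1 v + coord1 u * coord0 v) *: row_mx 0 (row_mx 0 (const_mx 1)).

Lemma altmul_std_basis n (T : {set {perm mat 1 n.+2}}) :
    is_alt_op T -> has_dim (weak_keys T) n ->
  exists2 E : 'M['F_2]_(n.+2), E \in unitmx &
    forall u v, altmul T (u *m E) (v *m E) = std_altmul u v *m E.
Proof.
move=> altT /has_dim_row_base [B0 rankB0 weak_keysB0].
have [e1 [e2 e12_neq0]] := altmul_neq0 altT weak_keysB0 rankB0.
have /weak_keysB0 e12B0 := altmul12_weak_key altT weak_keysB0 rankB0 e12_neq0.
have [B eqB sumB] := eqmx_rows_sum e12B0 e12_neq0.
have weak_keysB k : k \in weak_keys T <-> (k <= B)%MS by rewrite eqB.
have rankB : \rank B = n by rewrite eqB.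
exists (col_mx e1 (col_mx e2 B)); first exact: coords_unitmx weak_keysB rankB _ _ e12_neq0.
move=> u v; rewrite (altmul_coords altT weak_keysB) -scalemxAl.
by rewrite !mul_row_col !mul0mx !add0r sumB.
Qed.

Lemma alt_op_codim2_iso n (Tc Td : {set {perm mat 1 n.+2}}) :
    is_alt_op Tc -> is_alt_op Td ->
    has_dim (weak_keys Tc) n -> has_dim (weak_keys Td) n ->
  exists A : 'M['F_2]_(n.+2), A \in unitmx /\
    forall x y, circ Tc (x *m A) (y *m A) = circ Td x y *m A.
Proof.
move=> altc altd /(altmul_std_basis altc) [Ec unitEc stdc].
move=> /(altmul_std_basis altd) [Ed unitEd stdd].
exists (invmx Ed *m Ec); split; first by rewrite unitmx_mul unitmx_inv unitEd unitEc.
move=> x y; rewrite -[x](mulmxKV unitEd) -[y](mulmxKV unitEd).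
by rewrite !circE stdd !mulmxA !mulmxDl !(mulmxK unitEd) stdc.
Qed.

Definition rowwise_mul b s (A : 'I_b -> 'M['F_2]_s) (x : mat b s) : mat b s :=
  \matrix_i (row i x *m A i).

Section RowwiseMul.
Variables b s : nat.
Variable A : 'I_b -> 'M['F_2]_s.
Hypothesis unitA : forall i, A i \in unitmx.

Lemma row_rowwise_mul i x : row i (rowwise_mul A x) = row i x *m A i.
Proof. exact: rowK. Qed.

Lemma rowwise_mul_inj : injective (rowwise_mul A).
Proof.
move=> x y eq_xy; apply/row_matrixP => i.
by apply: (can_inj (mulmxK (unitA i))); rewrite -!row_rowwise_mul eq_xy.
Qed.

Lemma rowwise_mul_GL : is_GL (perm rowwise_mul_inj).
Proof.
move=> a x y; rewrite !permE; apply/row_matrixP => i.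
rewrite !row_rowwise_mul linearD linearZ /= mulmxDl.
by rewrite linearD linearZ /= !row_rowwise_mul scalemxAl.
Qed.

End RowwiseMul.

Theorem theorem4 (b s : nat)
    (Tc Td : {set {perm mat b s}})
    (Tcs Tds : 'I_b -> {set {perm mat 1 s}}) :
  is_alt_op Tc -> is_alt_op Td ->
  (forall i, is_alt_op (Tcs i)) -> (forall i, is_alt_op (Tds i)) ->
  parallel Tc Tcs -> parallel Td Tds ->
  (2 <= s)%N ->
  (forall i, has_dim (weak_keys (Tcs i)) (s - 2)) ->
  (forall i, has_dim (weak_keys (Tds i)) (s - 2)) ->
  exists g : {perm mat b s}, is_GL g /\ Td = conj_by Tc g.
Proof.
case: s Tc Td Tcs Tds => [|[|n]] // Tc Td Tcs Tds altc altd altcs altds parc pard _.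
rewrite !subSS subn0 => dimc dimd.
have [A isoA] := fin_all_exists
  (fun i => alt_op_codim2_iso (altcs i) (altds i) (dimc i) (dimd i)).
have unitA i : A i \in unitmx by case: (isoA i).
exists (perm (rowwise_mul_inj unitA)); split; first exact: rowwise_mul_GL.
apply: (conj_by_circ_morph altc altd) => x y; apply/row_matrixP => i.
by rewrite !permE parc !row_rowwise_mul pard; case: (isoA i) => _ ->.
Qed.
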